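(* Let $\mathbf{X}^{(1)}$ and $\mathbf{X}^{(2)}$ be $p$-variate random vectors with absolutely continuous distributions (populations $\Pi^{(1)}$, $\Pi^{(2)}$, with prior probabilities $\pi_1,\pi_2$). Fix a unit vector $\mathbf{u}\in\mathbb{R}^p$ and $\theta\in(0,1)$, and let $Q_Z^{(k)}(\theta;\mathbf{u})$ be the $\theta$-quantile of the continuous random variable $Z^{(k)}=\mathbf{u}^{\top}\mathbf{X}^{(k)}$, $k=1,2$. Let $Q_{\alpha}(\theta;\mathbf{u})=\min\{Q_Z^{(1)}(\theta;\mathbf{u}),Q_Z^{(2)}(\theta;\mathbf{u})\}$, and let $G_\alpha(\cdot;\mathbf{u})$, $g_\alpha(\cdot;\mathbf{u})$ and $\pi_\alpha$ be the distribution function (whose inverse gives $Q_\alpha$), density and prior probability of the population attaining this minimum; similarly let $Q_{\beta}(\theta;\mathbf{u})=\max\{Q_Z^{(1)}(\theta;\mathbf{u}),Q_Z^{(2)}(\theta;\mathbf{u})\}$ with corresponding $G_\beta(\cdot;\mathbf{u})$, $g_\beta(\cdot;\mathbf{u})$, $\pi_\beta$ for the other population. Consider the directional quantile classifier which assigns a new observation $\mathbf{y}$ to $\Pi^{(1)}$ if $\Phi^{(2)}(\theta;\mathbf{u}^{\top}\mathbf{y})-\Phi^{(1)}(\theta;\mathbf{u}^{\top}\mathbf{y})>0$ and to $\Pi^{(2)}$ otherwise. Then its probability of correct classification is $$\psi(\theta)=\pi_\alpha G_\alpha(\tilde Q(\theta;\mathbf{u});\mathbf{u})+\pi_\beta\{1-G_\beta(\tilde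 Q(\theta;\mathbf{u});\mathbf{u})\},$$ where $\tilde Q(\theta;\mathbf{u})=\theta Q_\alpha(\theta;\mathbf{u})+(1-\theta)Q_\beta(\theta;\mathbf{u})$, and analogously its misclassification rate is $$1-\psi(\theta)=\pi_\alpha\{1-G_\alpha(\tilde Q(\theta;\mathbf{u});\mathbf{u})\}+\pi_\beta G_\beta(\tilde Q(\theta;\mathbf{u});\mathbf{u}).$$
   Context: For $k=1,2$ and a real number $z$, $\Phi^{(k)}(\theta;z)=\{\theta+(1-2\theta)I(z-Q_Z^{(k)}(\theta;\mathbf{u})<0)\}\,|z-Q_Z^{(k)}(\theta;\mathbf{u})|$, where $I(\cdot)$ is the indicator function. The $\theta$-quantile $Q_Z^{(k)}(\theta;\mathbf{u})$ is the $\theta$th directional quantile of $\mathbf{X}^{(k)}$ in direction $\mathbf{u}$. *)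

From HB Require Import structures.
From mathcomp Require Import all_boot all_order all_algebra.
From mathcomp Require Import all_classical all_reals all_analysis.
Set Implicit Arguments. Unset Strict Implicit. Unset Printing Implicit Defensive.
Import Order.TTheory GRing.Theory Num.Theory.
Local Open Scope classical_set_scope.
Local Open Scope ring_scope.

Definition inner (R : realType) (p : nat) (u x : 'rV[R]_p) : R :=
  \sum_(i < p) u 0 i * x 0 i.

Definition check_loss (R : realType) (theta z Q : R) : R :=
  (theta + (1 - 2 * theta) * ((z - Q < 0)%R : bool)%:R) * `|z - Q|.

Definition rV_lebesgue_null (R : realType) (p : nat) (A : set 'rV[R]_p) : Prop :=
  forall e : R, 0 < e ->
  exists a b : nat -> 'rV[R]_p,
    [/\ (forall n i, a n 0 i <= b n 0 i),
        A `<=` \bigcup_n [set x | forall i, a n 0 i <= x 0 i <= b n 0 i]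
      & (forall N, \sum_(n < N) \prod_(i < p) (b n 0 i - a n 0 i) <= e)].

Definition quantile (R : realType) (G : R -> R) (theta : R) : R :=
  inf [set x | theta <= G x].

Definition pop1 : 'I_2 := ord0.
Definition pop2 : 'I_2 := ord_max.

From HB Require Import structures.
From mathcomp Require Import all_boot all_order all_algebra.
From mathcomp Require Import all_classical all_reals all_analysis.
From mathcomp Require Import lra.
Set Implicit Arguments. Unset Strict Implicit. Unset Printing Implicit Defensive.
Import Order.TTheory GRing.Theory Num.Theory.
Local Open Scope classical_set_scope.
Local Open Scope ring_scope.

(* For 0 < theta < 1 and quantiles q_alpha < q_beta, the check-loss gap
   Phi_beta(z) - Phi_alpha(z) is positive exactly when z lies below the
   convex combination theta q_alpha + (1 - theta) q_beta.  The classifier is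
   therefore a threshold rule on Z = u^T y at that point, so its success
   probability is a combination of the distribution functions of Z^(1) and
   Z^(2) at the threshold; the boundary itself is a null event because
   Z^(k) is continuous. *)

Lemma check_lossE (R : realType) (theta z q : R) :
  check_loss theta z q = if z < q then (1 - theta) * (q - z) else theta * (z - q).
Proof.
rewrite /check_loss subr_lt0; case: ltP => zq /=.
- by rewrite ltr0_norm ?subr_lt0 //; lra.
- by rewrite ger0_norm ?subr_ge0 //; lra.
Qed.

Section check_loss_comparison.
Variables (R : realType) (theta z : R).
Hypothesis theta01 : 0 < theta < 1.

Lemma lt_check_loss_below (q1 q2 : R) : q1 < q2 ->
  (check_loss theta z q1 < check_loss theta z q2) = (z < theta * q1 + (1 - theta) * q2).
Proof.
case/andP: theta01 => theta0 theta1 q12; rewrite !check_lossE.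
by case: (ltP z q1) => ?; case: (ltP z q2) => ?; apply/idP/idP; nra.
Qed.

Lemma lt_check_loss_above (q1 q2 : R) : q2 < q1 ->
  (check_loss theta z q1 < check_loss theta z q2) = (theta * q2 + (1 - theta) * q1 < z).
Proof.
case/andP: theta01 => theta0 theta1 q21; rewrite !check_lossE.
by case: (ltP z q1) => ?; case: (ltP z q2) => ?; apply/idP/idP; nra.
Qed.

End check_loss_comparison.

Lemma measurable_inner (R : realType) (d : measure_display) (T : measurableType d)
    (p : nat) (u : 'rV[R]_p) (Y : T -> 'rV[R]_p) :
  (forall i, measurable_fun setT (fun t => Y t 0 i)) ->
  measurable_fun setT (fun t => inner u (Y t)).
Proof.
move=> mY; apply: measurable_sum => i.
exact: measurable_realfun.measurable_funM (measurable_cst _) (mY i).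
Qed.

Section continuous_real_variable.
Variables (R : realType) (d : measure_display) (T : measurableType d).
Variables (P : probability T R) (f : T -> R).
Hypothesis mf : measurable_fun setT f.

Lemma measurable_ler_set (c : R) : measurable [set t | f t <= c].
Proof.
have := mf measurableT (measurable_itv `]-oo, c]); rewrite setTI.
by congr measurable; apply/seteqP; split=> t /=; rewrite in_itv.
Qed.

Lemma measurable_ltr_set (c : R) : measurable [set t | f t < c].
Proof.
have := mf measurableT (measurable_itv `]-oo, c[); rewrite setTI.
by congr measurable; apply/seteqP; split=> t /=; rewrite in_itv.
Qed.

Lemma measurable_gtr_set (c : R) : measurable [set t | c < f t].
Proof.
have := mf measurableT (measurable_itv `]c, +oo[); rewrite setTI.
by congr measurable; apply/seteqP; split=> t /=; rewrite in_itv andbT.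
Qed.

Lemma fine_probability_not (b : T -> bool) : measurable [set t | b t] ->
  fine (P [set t | ~~ b t]) = 1 - fine (P [set t | b t]).
Proof.
move=> mb; have -> : [set t | ~~ b t] = ~` [set t | b t].
  by apply/seteqP; split=> t /= /negP.
by rewrite probability_setC // fineB ?fin_num_measure.
Qed.

Lemma fine_probability_gtr (c : R) :
  fine (P [set t | c < f t]) = 1 - fine (P [set t | f t <= c]).
Proof.
have -> : [set t | c < f t] = [set t | ~~ (f t <= c)].
  by apply/eq_set => t; rewrite real_ltNge ?num_real.
exact/fine_probability_not/measurable_ler_set.
Qed.

Variable c : R.
Hypothesis f_nonatomic : P [set t | f t = c] = 0%E.

Lemma fine_probability_ltr :
  fine (P [set t | f t < c]) = fine (P [set t | f t <= c]).
Proof.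
have -> : [set t | f t <= c] = [set t | f t < c] `|` [set t | f t = c].
  apply/seteqP; split=> t /=; last by case=> [/ltW|->].
  by rewrite le_eqVlt => /orP[/eqP->|->]; [right|left].
rewrite measureU /=.
- by rewrite f_nonatomic adde0.
- exact: measurable_ltr_set.
- by have := mf measurableT (measurable_set1 c); rewrite setTI.
- by apply/seteqP; split=> t // [/= + ftc]; rewrite ftc ltxx.
Qed.

End continuous_real_variable.

Lemma neq_pops (a b : 'I_2) : a != b ->
  (a = pop1 /\ b = pop2) \/ (a = pop2 /\ b = pop1).
Proof.
have pops (k : 'I_2) : k = pop1 \/ k = pop2.
  by case: k => -[|[|//]] ?; [left|right]; apply: val_inj.
by case: (pops a) => ->; case: (pops b) => ->; rewrite ?eqxx; auto.
Qed.

Theorem lemma1 (R : realType) (d : measure_display) (T : measurableType d)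
  (P : probability T R) (p : nat) (X : 'I_2 -> T -> 'rV[R]_p)
  (pi : 'I_2 -> R) (u : 'rV[R]_p) (theta : R) :
  (forall k i, measurable_fun setT (fun t => X k t 0 i)) ->
  (* absolutely continuous p-variate distributions *)
  (forall k (A : set 'rV[R]_p), rV_lebesgue_null A -> P.-negligible (X k @^-1` A)) ->
  (* Z^(k) = u^T X^(k) is a continuous random variable *)
  (forall k c, P [set t | inner u (X k t) = c] = 0%E) ->
  (forall k, 0 <= pi k) -> pi pop1 + pi pop2 = 1 ->
  inner u u = 1 ->
  0 < theta < 1 ->
  let Z k t := inner u (X k t) in
  let G k x := fine (P [set t | Z k t <= x]) in
  let Q k := quantile (G k) theta in
  let Phi k z := check_loss theta z (Q k) in
  let assign1 (y : 'rV[R]_p) := 0 < Phi pop2 (inner u y) - Phi pop1 (inner u y) in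
  let psi := pi pop1 * fine (P [set t | assign1 (X pop1 t)])
           + pi pop2 * fine (P [set t | ~~ assign1 (X pop2 t)]) in
  Q pop1 != Q pop2 ->
  forall a b : 'I_2, a != b ->
  Q a = Num.min (Q pop1) (Q pop2) -> Q b = Num.max (Q pop1) (Q pop2) ->
  let Qt := theta * Q a + (1 - theta) * Q b in
  psi = pi a * G a Qt + pi b * (1 - G b Qt) /\
  1 - psi = pi a * (1 - G a Qt) + pi b * G b Qt.
Proof.
move=> mX _ Zcont _ pi1 _ theta01 Z G Q Phi assign1 psi Q12 a b ab Qa Qb Qt.
have mZ k : measurable_fun setT (Z k) := measurable_inner u (mX k).
have ltQab : Q a < Q b.
  rewrite lt_neqAle {2}Qa {2}Qb ge_min le_max lexx andbT.
  by case: (neq_pops ab) => -[-> ->]; rewrite // eq_sym.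
case: (neq_pops ab) => -[ea eb]; subst a b; rewrite /psi.
- have -> : assign1 = fun y => inner u y < Qt.
    by apply/funext => y; rewrite /assign1 subr_gt0 lt_check_loss_below.
  rewrite fine_probability_not; last exact: measurable_ltr_set (mZ pop2) Qt.
  rewrite !(fine_probability_ltr (mZ _) (Zcont _ _)).
  by rewrite /G; split; lra.
- have -> : assign1 = fun y => Qt < inner u y.
    by apply/funext => y; rewrite /assign1 subr_gt0 lt_check_loss_above.
  rewrite fine_probability_not; last exact: measurable_gtr_set (mZ pop2) Qt.
  rewrite !(fine_probability_gtr P (mZ _)).
  by rewrite /G; split; lra.
Qed.
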